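(* Under the standing assumptions below, $P(t)=Q(t)$ is the unique $1$-periodic smooth family of projections $P(t)$ onto co-dimension-one subspaces (rank $n-1$) such that $X(t)P(0)=P(t)X(t)$ for all $t$ and $\Gamma(t)$ restricts to a bijection of $\operatorname{Im}P(t)$ onto itself for every $t$.
   Context: Let $n\ge 1$, let $f:\mathbb{R}^n\to\mathbb{R}^n$ be smooth, let $T>0$, and let $\gamma:\mathbb{R}\to\mathbb{R}^n$ be a $1$-periodic solution of $\dot x=Tf(x)$ with $f(\gamma(0))\neq 0$. Let $X(t)$ be the $n\times n$ matrix solution of $\dot X=T\,\mathrm{D}f(\gamma(t))X$, $X(0)=I_n$. Let $\Gamma(t):=X(t)(X(1)-I_n)X^{-1}(t)$. Hyperbolicity assumption: there is a vector $w\in\mathbb{R}^n$ such that $Q(t):=X(t)\big(I_n-f(\gamma(0))w^\mathsf{T}\big)X^{-1}(t)$ is a projection for every $t$, the family is $1$-periodic, and $\Gamma(t)$ restricts to a bijection of $\operatorname{Im}Q(t)$ onto itself. *)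

From HB Require Import structures.
From mathcomp Require Import all_boot all_order all_algebra.
From mathcomp Require Import all_classical all_reals all_analysis.
Set Implicit Arguments. Unset Strict Implicit. Unset Printing Implicit Defensive.
Import Order.TTheory GRing.Theory Num.Theory.
Import numFieldNormedType.Exports.
Local Open Scope classical_set_scope.
Local Open Scope ring_scope.

Fixpoint Ck {R : realType} {V W : normedModType R} (k : nat) (f : V -> W)
  : Prop :=
  match k with
  | 0 => continuous f
  | k'.+1 => (forall x, differentiable f x) /\
             (forall v : V, Ck k' (fun x => 'D_v f x))
  end.

Definition smooth {R : realType} {V W : normedModType R} (f : V -> W) : Prop :=
  forall k, Ck k f.

Definition mx_image {R : realType} {n : nat} (A : 'M[R]_n) : set 'cV[R]_n :=
  [set v | exists u : 'cV[R]_n, v = A *m u].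

Definition restricts_bij_on_image {R : realType} {n : nat} (A P : 'M[R]_n)
  : Prop :=
  set_bij (mx_image P) (mx_image P) (fun v : 'cV[R]_n => A *m v).

(* Write u := f(gamma 0)^T and B := X(1) - I = Gamma(0).  Both s |-> X(s) u and
   s |-> f(gamma s)^T solve the variational equation Z' = T Df(gamma) Z and agree
   at s = 0, so uniqueness for linear ODEs (an energy estimate on |Z|^2 plus
   Gronwall) and periodicity of gamma give X(1) u = u, i.e. B u = 0.  Since
   Q(0) = I - u w, w = 0 would make B kill u inside Im Q(0) = R^n; so w <> 0, and
   Q(0)^2 = Q(0) then forces w u = 1, making Q(0) a projection of rank n-1.  The
   same uniqueness makes X(t) invertible, so Q is smooth and conjugate to Q(0).
   For another family P, periodicity makes P(0) commute with X(1), hence with B.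
   Injectivity of B on Im P(0) gives P(0) u = 0; surjectivity and Q(0) B = B give
   Im P(0) <= Im Q(0), with equality by rank, so P(0) = P(0) (Q(0) + u w) = Q(0)
   and P(t) = X(t) P(0) X(t)^-1 = Q(t). *)

From HB Require Import structures.
From mathcomp Require Import all_boot all_order all_algebra.
From mathcomp Require Import all_classical all_reals all_analysis.
From mathcomp Require Import ring lra zify.
Import Order.TTheory GRing.Theory Num.Theory.
Import numFieldNormedType.Exports.
Local Open Scope classical_set_scope.
Local Open Scope ring_scope.

Section CkAlgebra.
Context {R : realType} {V W : normedModType R}.

Lemma CkW {k} {f : V -> W} : Ck k.+1 f -> Ck k f.
Proof.
elim: k f => [|k IH] f [df Df]; first by move=> x; exact: differentiable_continuous.
by split=> // v; apply: IH.
Qed.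

Lemma Ck_cst k (c : W) : Ck k (fun _ : V => c).
Proof.
elim: k c => [|k IH] c; first by move=> x; exact: cvg_cst.
split=> [x|v]; first exact: differentiable_cst.
have -> : (fun x => 'D_v (fun _ : V => c) x) = (fun _ => 0).
  by apply/funext => x; rewrite (derive_cst c).
exact: IH.
Qed.

Lemma CkD k (f g : V -> W) : Ck k f -> Ck k g -> Ck k (fun x => f x + g x).
Proof.
elim: k f g => [|k IH] f g.
  by move=> cf cg x; apply: continuousD; [exact: cf | exact: cg].
move=> [df Df] [dg Dg]; split=> [x|v]; first exact: differentiableD.
have -> : (fun x => 'D_v (fun x => f x + g x) x) = (fun x => 'D_v f x + 'D_v g x).
  by apply/funext => x; rewrite deriveD //; exact: diff_derivable.
exact: IH (Df v) (Dg v).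
Qed.

Lemma CkZ k (c : R) (f : V -> W) : Ck k f -> Ck k (fun x => c *: f x).
Proof.
elim: k f => [|k IH] f.
  by move=> cf x; apply: continuousZ; [exact: cvg_cst | exact: cf].
move=> [df Df]; split=> [x|v]; first exact: differentiableZ.
have -> : (fun x => 'D_v (fun x => c *: f x) x) = (fun x => c *: 'D_v f x).
  by apply/funext => x; rewrite deriveZ //; exact: diff_derivable.
exact: IH (Df v).
Qed.

Lemma Ck_sum k (I : Type) (r : seq I) (P : pred I) (F : I -> V -> W) :
  (forall i, P i -> Ck k (F i)) -> Ck k (fun x => \sum_(i <- r | P i) F i x).
Proof.
move=> CF; rewrite -fct_sumE.
by apply: big_ind => //; [exact: Ck_cst | exact: CkD].
Qed.

Lemma Ck_linear {W' : normedModType R} k (L : W -> W') (f : V -> W) :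
  linear L -> continuous L -> Ck k f -> Ck k (fun x => L (f x)).
Proof.
move=> linL cL.
pose LL : {linear W -> W'} := HB.pack L (GRing.isLinear.Build _ _ _ _ _ linL).
have cLL : continuous LL := cL.
have dL x : differentiable LL x := linear_differentiable x cLL.
elim: k f => [|k IH] f.
  by move=> cf x; apply: continuous_comp; [exact: cf | exact: cL].
move=> [df Df]; split=> [x|v]; first exact: (differentiable_comp (df x) (dL _)).
have -> : (fun x => 'D_v (fun x => L (f x)) x) = (fun x => L ('D_v f x)).
  apply/funext => x; rewrite (deriveE v (differentiable_comp (df x) (dL _))).
  by rewrite (diff_comp (df x) (dL _)) /= (diff_lin (f:=LL)) // deriveE.
exact: IH (Df v).
Qed.

End CkAlgebra.

Section CkReal.
Context {R : realType}.

Lemma CkSE {W : normedModType R} k (h : R -> W) :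
  Ck k.+1 h <-> (forall x, differentiable h x) /\ Ck k (fun x => 'D_1 h x).
Proof.
split=> [[dh Dh]|[dh Dh]]; first by split => //; exact: Dh.
split=> // v.
have -> : (fun x => 'D_v h x) = (fun x => v *: 'D_1 h x).
  by apply/funext => x; rewrite !deriveE // diff1E // scale1r derive1E.
exact: CkZ.
Qed.

Lemma CkM k (s u : R -> R) : Ck k s -> Ck k u -> Ck k (fun x => s x * u x).
Proof.
elim: k s u => [|k IH] s u.
  by move=> cs cu x; apply: continuousM; [exact: cs | exact: cu].
move=> Cs Cu; have /CkSE[ds Ds] := Cs; have /CkSE[du Du] := Cu.
apply/CkSE; split=> [x|]; first exact: differentiableM.
have -> : (fun x => 'D_1 (fun x => s x * u x) x) =
    (fun x => s x * 'D_1 u x + u x * 'D_1 s x).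
  by apply/funext => x; rewrite deriveM //; exact: diff_derivable.
by apply: CkD; apply: IH => //; exact: CkW.
Qed.

Lemma Ck_prod k (I : Type) (r : seq I) (P : pred I) (F : I -> R -> R) :
  (forall i, P i -> Ck k (F i)) -> Ck k (fun x => \prod_(i <- r | P i) F i x).
Proof.
move=> CF; rewrite -fct_prodE.
by apply: big_ind => //; [exact: Ck_cst | exact: CkM].
Qed.

Lemma CkV k (s : R -> R) : (forall x, s x != 0) -> Ck k s -> Ck k (fun x => (s x)^-1).
Proof.
move=> s_neq0; elim: k => [|k IH] Cs.
  by move=> x; apply: continuous_comp; [exact: Cs | exact: inv_continuous].
have /CkSE[ds Ds] := Cs; apply/CkSE; split=> [x|].
  exact: differentiableV.
have -> : (fun x => 'D_1 (fun x => (s x)^-1) x) =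
    (fun x => (-1) *: ((s x)^-1 * ((s x)^-1 * 'D_1 s x))).
  apply/funext => x; rewrite deriveV //; last exact: diff_derivable.
  by rewrite scaleN1r mulrA -expr2 exprVn -mulNr.
have Cs_inv := IH (CkW Cs).
by apply: CkZ; apply: CkM => //; apply: CkM.
Qed.

End CkReal.

Section CkMatrix.
Context {R : realType}.

Lemma Ck_mxP {V : normedModType R} k m n (M : V -> 'M[R]_(m, n)) :
  Ck k M <-> forall i j, Ck k (fun x => M x i j).
Proof.
split=> [CM i j|CM].
  apply: (Ck_linear k (fun A : 'M[R]_(m, n) => A i j)) => //.
    by move=> a A B; rewrite !mxE.
  exact: coord_continuous.
have -> : M = (fun x => \sum_i \sum_j M x i j *: (delta_mx i j : 'M[R]_(m, n))).
  by apply/funext => x; rewrite {1}(matrix_sum_delta (M x)).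
apply: Ck_sum => i _; apply: Ck_sum => j _.
apply: (Ck_linear k (fun a : R => a *: (delta_mx i j : 'M[R]_(m, n)))) => //.
  by move=> a x y; rewrite scalerDl scalerA.
exact: scalel_continuous.
Qed.

Lemma Ck_scalemx k m n (s : R -> R) (M : R -> 'M[R]_(m, n)) :
  Ck k s -> Ck k M -> Ck k (fun x => s x *: M x).
Proof.
move=> Cs /Ck_mxP CM; apply/Ck_mxP => i j.
under eq_fun do rewrite mxE.
exact: CkM.
Qed.

Lemma Ck_mulmx k m n p (A : R -> 'M[R]_(m, n)) (B : R -> 'M[R]_(n, p)) :
  Ck k A -> Ck k B -> Ck k (fun x => A x *m B x).
Proof.
move=> /Ck_mxP CA /Ck_mxP CB; apply/Ck_mxP => i j.
under eq_fun do rewrite mxE.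
by apply: Ck_sum => l _; apply: CkM.
Qed.

Lemma Ck_det k m (A : R -> 'M[R]_m) : Ck k A -> Ck k (fun x => \det (A x)).
Proof.
move=> /Ck_mxP CA; rewrite /determinant.
apply: Ck_sum => s _; apply: CkM; first exact: Ck_cst.
by apply: Ck_prod => i _.
Qed.

Lemma Ck_cofactor k m (A : R -> 'M[R]_m) i j :
  Ck k A -> Ck k (fun x => cofactor (A x) i j).
Proof.
move=> /Ck_mxP CA; under eq_fun do rewrite expand_cofactor.
apply: Ck_sum => s _; apply: CkM; first exact: Ck_cst.
by apply: Ck_prod => l _.
Qed.

Lemma Ck_invmx k m (A : R -> 'M[R]_m) : (forall x, A x \in unitmx) ->
  Ck k A -> Ck k (fun x => invmx (A x)).
Proof.
move=> A_unit CA; apply/Ck_mxP => i j.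
under eq_fun do rewrite /invmx A_unit !mxE.
apply: CkM; last exact: Ck_cofactor.
apply: CkV; last exact: Ck_det.
by move=> x; rewrite -unitfE -unitmxE.
Qed.

Lemma Ck_comp {k n} {g : 'rV[R]_n -> 'rV[R]_n} {h : R -> 'rV[R]_n} :
  Ck k g -> Ck k h -> Ck k (fun x => g (h x)).
Proof.
elim: k g h => [|k IH] g h.
  by move=> cg ch x; exact: (continuous_comp (ch x) (cg (h x))).
move=> [dg Dg] Ch; have /CkSE[dh Dh] := Ch; apply/CkSE; split=> [x|].
  exact: (differentiable_comp (dh x) (dg (h x))).
have -> : (fun x => 'D_1 (fun x => g (h x)) x) =
    (fun x => \sum_i ('D_1 h x) 0 i *: 'D_('e_i) g (h x)).
  apply/funext => x; have dgh := differentiable_comp (dh x) (dg (h x)).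
  rewrite (deriveE (1 : R) dgh) (diff_comp (dh x) (dg (h x))) /=.
  rewrite -(deriveE (1 : R) (dh x)).
  rewrite {1}(row_sum_delta ('D_1 h x)) linear_sum.
  by apply: eq_bigr => i _; rewrite linearZ /= -deriveE.
apply: Ck_sum => i _; apply: Ck_scalemx; first by move: Dh => /Ck_mxP; apply.
exact: IH _ _ (Dg 'e_i) (CkW Ch).
Qed.

End CkMatrix.

Section MatrixDerive.
Context {R : realType}.

Lemma is_derive_mxP m n (M : R -> 'M[R]_(m, n)) t (dM : 'M[R]_(m, n)) :
  is_derive t (1 : R) M dM <->
  forall i j, is_derive t (1 : R) (fun s => M s i j) (dM i j).
Proof.
split=> [[dv dval] i j|dMij].
  apply: DeriveDef; first exact: (proj1 (derivable_mxP M t 1) dv i j).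
  by rewrite -dval derive_mx // mxE.
have dv : derivable M t 1 by apply/derivable_mxP => i j; case: (dMij i j).
apply: DeriveDef => //.
by rewrite derive_mx //; apply/matrixP => i j; rewrite mxE derive_val.
Qed.

Lemma is_derive_mulmxr m n p (M : R -> 'M[R]_(m, n)) (B : 'M[R]_(n, p)) t
    (dM : 'M[R]_(m, n)) :
  is_derive t (1 : R) M dM -> is_derive t (1 : R) (fun s => M s *m B) (dM *m B).
Proof.
move=> /is_derive_mxP dMij; apply/is_derive_mxP => i j; rewrite mxE.
have -> : (fun s => (M s *m B) i j) = \sum_l ((fun s => M s i l) * cst (B l j)).
  by rewrite fct_sumE; apply/funext => s; rewrite mxE.
apply: is_derive_sum => l.
have := is_deriveM (dMij i l) (is_derive_cst (B l j) t (1 : R)).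
by rewrite scaler0 add0r [dM i l * _]mulrC.
Qed.

Lemma is_derive_trmx m n (M : R -> 'M[R]_(m, n)) t (dM : 'M[R]_(m, n)) :
  is_derive t (1 : R) M dM -> is_derive t (1 : R) (fun s => (M s)^T) dM^T.
Proof.
move=> /is_derive_mxP dMij; apply/is_derive_mxP => i j; rewrite mxE.
by under eq_fun do rewrite mxE.
Qed.

End MatrixDerive.

Section Gronwall.
Context {R : realType} {g dg : R -> R} {C : R}.
Hypotheses (g_ge0 : forall x, 0 <= g x) (gE : forall x, is_derive x (1 : R) g (dg x)).

Lemma is_derive_mul_expR c x :
  is_derive x (1 : R) (fun s => g s * expR (c * s)) (expR (c * x) * (dg x + c * g x)).
Proof.
have lin : is_derive x (1 : R) (fun s : R => c * s) c.
  have := is_deriveZ c (is_derive_id x (1 : R)).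
  by rewrite /GRing.scale /= mulr1.
have := is_deriveM (gE x) (is_derive1_comp (is_derive_expR (c * x)) lin).
suff -> : expR (c * x) * (dg x + c * g x) =
  g x *: (expR (c * x) * c) + expR (c * x) *: dg x by apply.
by rewrite /GRing.scale /=; ring.
Qed.

Let derivable_mul_expR c x : derivable (fun s => g s * expR (c * s)) x 1.
Proof. by case: (is_derive_mul_expR c x). Qed.

Let continuous_mul_expR c : continuous (fun s => g s * expR (c * s)).
Proof.
move=> x; apply: differentiable_continuous; apply/derivable1_diffP.
exact: derivable_mul_expR.
Qed.

Lemma gronwall_vanishr a b : a <= b ->
  (forall x, x \in `]a, b[ -> `|dg x| <= C * g x) -> g a = 0 -> g b = 0.
Proof.
move=> ab dg_le ga0.
have : g b * expR (- C * b) <= g a * expR (- C * a).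
  apply: (@ler0_derive1_le_cc _ (fun s => g s * expR (- C * s)) a b);
    rewrite ?in_itv /= ?lexx ?ab //.
  - move=> x x_ab; rewrite derive1E; have [_ ->] := is_derive_mul_expR (- C) x.
    rewrite pmulr_rle0 ?expR_gt0 // mulNr subr_le0.
    exact: le_trans (ler_norm _) (dg_le x x_ab).
  - exact: continuous_subspaceT.
rewrite ga0 mul0r pmulr_lle0 ?expR_gt0 // => gb_le0.
by apply/eqP; rewrite eq_le gb_le0 g_ge0.
Qed.

Lemma gronwall_vanishl a b : a <= b ->
  (forall x, x \in `]a, b[ -> `|dg x| <= C * g x) -> g b = 0 -> g a = 0.
Proof.
move=> ab dg_le gb0.
have : g a * expR (C * a) <= g b * expR (C * b).
  apply: (@ger0_derive1_le_cc _ (fun s => g s * expR (C * s)) a b);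
    rewrite ?in_itv /= ?lexx ?ab //.
  - move=> x x_ab; rewrite derive1E; have [_ ->] := is_derive_mul_expR C x.
    rewrite pmulr_rge0 ?expR_gt0 // addrC -[dg x]opprK subr_ge0.
    by rewrite (le_trans _ (dg_le x x_ab)) // -normrN ler_norm.
  - exact: continuous_subspaceT.
rewrite gb0 mul0r pmulr_lle0 ?expR_gt0 // => ga_le0.
by apply/eqP; rewrite eq_le ga_le0 g_ge0.
Qed.

End Gronwall.

Section LinearODE.
Context {R : realType}.

Lemma mx_norm_entry_le m n (A : 'M[R]_(m, n)) i j : `|A i j| <= `|A|.
Proof.
rewrite [X in _ <= X]mx_normrE.
exact: (le_bigmax _ (fun ij : 'I_m * 'I_n => `|A ij.1 ij.2|) (i, j)).
Qed.

Lemma sqr_sum_norm_le n (z : 'I_n -> R) :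
  (\sum_i `|z i|) ^+ 2 <= n%:R * \sum_i z i ^+ 2.
Proof.
have sum_const_inner (F : 'I_n -> R) : \sum_i \sum_(j < n) F i = n%:R * \sum_i F i.
  by rewrite mulr_sumr; apply: eq_bigr => i _; rewrite sumr_const card_ord mulr_natl.
rewrite -(ler_pM2l (ltr0Sn R 1)) expr2 mulr_suml.
under eq_bigr do rewrite mulr_sumr.
apply: (@le_trans _ _ (\sum_i \sum_(j < n) (z i ^+ 2 + z j ^+ 2))).
  rewrite mulr_sumr ler_sum // => i _; rewrite mulr_sumr ler_sum // => j _.
  rewrite -[z i ^+ 2]real_normK ?num_real // -[z j ^+ 2]real_normK ?num_real //.
  rewrite -subr_ge0.
  have -> : `|z i| ^+ 2 + `|z j| ^+ 2 - 2%:R * (`|z i| * `|z j|) =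
    (`|z i| - `|z j|) ^+ 2 by ring.
  exact: sqr_ge0.
under eq_bigr do rewrite big_split /=.
rewrite big_split /= sum_const_inner exchange_big /= sum_const_inner.
by rewrite mulr2n mulrDl mul1r.
Qed.

Lemma sum_mul_mulmx_le n (A : 'M[R]_n) (z : 'cV[R]_n) :
  `|\sum_i z i 0 * (A *m z) i 0| <= n%:R * `|A| * \sum_i z i 0 ^+ 2.
Proof.
have Az_le i : `|(A *m z) i 0| <= `|A| * \sum_l `|z l 0|.
  rewrite mxE (le_trans (ler_norm_sum _ _ _)) // mulr_sumr ler_sum // => l _.
  by rewrite normrM ler_wpM2r // mx_norm_entry_le.
apply: le_trans (ler_norm_sum _ _ _) _.
apply: (@le_trans _ _ (\sum_i `|z i 0| * (`|A| * \sum_l `|z l 0|))).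
  by apply: ler_sum => i _; rewrite normrM ler_wpM2l.
rewrite -mulr_suml mulrCA -expr2 [n%:R * _]mulrC -mulrA ler_wpM2l //.
exact: sqr_sum_norm_le _ (fun i => z i 0).
Qed.

Lemma continuous_bounded_itv {V : normedModType R} {h : R -> V} {a b : R} :
  continuous h -> a <= b -> exists M, forall x, x \in `[a, b] -> `|h x| <= M.
Proof.
move=> ch ab.
have ch_norm : continuous (fun x => `|h x|).
  by move=> x; apply: continuous_comp; [exact: ch | exact: norm_continuous].
have [c _ hc] := EVT_max ab (continuous_subspaceT ch_norm).
by exists `|h c|.
Qed.

Lemma linear_ode_zero {n} {A : R -> 'M[R]_n} {Z : R -> 'cV[R]_n} {t0 : R} :
  continuous A -> (forall t, is_derive t (1 : R) Z (A t *m Z t)) ->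
  Z t0 = 0 -> forall t, Z t = 0.
Proof.
move=> cA ZE Z0 t1.
pose g s := \sum_i Z s i 0 ^+ 2.
pose dg s := 2 * \sum_i Z s i 0 * (A s *m Z s) i 0.
have g_ge0 s : 0 <= g s by apply: sumr_ge0 => i _; exact: sqr_ge0.
have gE s : is_derive s (1 : R) g (dg s).
  have -> : g = \sum_i ((fun s => Z s i 0) * (fun s => Z s i 0)).
    by rewrite fct_sumE; apply/funext => s'; apply: eq_bigr => i _; rewrite expr2.
  rewrite /dg mulr_sumr; apply: is_derive_sum => i.
  have /is_derive_mxP/(_ i 0) Zi := ZE s.
  by have := is_deriveM Zi Zi; rewrite /GRing.scale /= -mulr2n mulr_natl; apply.
have g0 : g t0 = 0 by rewrite /g Z0; apply: big1 => i _; rewrite mxE expr0n.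
have dg_le a b : a <= b -> exists C, forall x, x \in `]a, b[ -> `|dg x| <= C * g x.
  move=> ab; have [M AM] := continuous_bounded_itv cA ab.
  exists (2 * n%:R * M) => x /subset_itv_oo_cc /AM Ax.
  have := sum_mul_mulmx_le _ (A x) (Z x); rewrite -/(g x) => dg_bound.
  have := ler_wpM2r (g_ge0 x) (ler_wpM2l (ler0n _ n) Ax).
  rewrite /dg normrM ger0_norm //; lra.
have g1 : g t1 = 0.
  have [t01|/ltW t10] := leP t0 t1.
    have [C HC] := dg_le _ _ t01.
    exact: gronwall_vanishr g_ge0 gE _ _ t01 HC g0.
  have [C HC] := dg_le _ _ t10.
  exact: gronwall_vanishl g_ge0 gE _ _ t10 HC g0.
apply/matrixP => i j; rewrite [j]ord1 mxE.
have := psumr_eq0P (fun i _ => sqr_ge0 (Z t1 i 0)) g1 (i := i) isT.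
by move/eqP; rewrite sqrf_eq0 => /eqP.
Qed.

End LinearODE.

Section VariationalEquation.
Context {R : realType} {n : nat} {f : 'rV[R]_n -> 'rV[R]_n} {T : R}
  {gamma : R -> 'rV[R]_n} {X : R -> 'M[R]_n}.
Hypotheses (f_smooth : smooth f)
  (gammaE : forall t, is_derive t (1 : R) gamma (T *: f (gamma t)))
  (XE : forall t, is_derive t (1 : R) X (T *: (('J f (gamma t))^T *m X t)))
  (X0 : X 0 = 1%:M).

Let A t := T *: ('J f (gamma t))^T.

Lemma gamma_Ck k : Ck k gamma.
Proof.
elim: k => [|k IH].
  move=> x; apply: differentiable_continuous; apply/derivable1_diffP.
  by case: (gammaE x).
apply/CkSE; split=> [x|]; first by apply/derivable1_diffP; case: (gammaE x).
have -> : (fun x => 'D_1 gamma x) = (fun x => T *: f (gamma x)).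
  by apply/funext => x; case: (gammaE x).
exact/CkZ/Ck_comp.
Qed.

Lemma jacobianT_Ck k : Ck k (fun t => ('J f (gamma t))^T).
Proof.
apply/Ck_mxP => i j.
have -> : (fun t => ('J f (gamma t))^T i j) = (fun t => ('D_('e_j) f (gamma t)) 0 i).
  apply/funext => t; rewrite mxE deriveEjacobian; last exact: (f_smooth 1).1.
  by rewrite -(rowE j) [in RHS]mxE.
by move: (Ck_comp ((f_smooth k.+1).2 'e_j) (gamma_Ck k)) => /Ck_mxP.
Qed.

Lemma A_continuous : continuous A.
Proof. exact/(CkZ 0)/jacobianT_Ck. Qed.

Lemma X_Ck k : Ck k X.
Proof.
elim: k => [|k IH].
  move=> x; apply: differentiable_continuous; apply/derivable1_diffP.
  by case: (XE x).
apply/CkSE; split=> [x|]; first by apply/derivable1_diffP; case: (XE x).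
have -> : (fun x => 'D_1 X x) = (fun x => T *: (('J f (gamma x))^T *m X x)).
  by apply/funext => x; case: (XE x).
exact/CkZ/Ck_mulmx/IH/jacobianT_Ck.
Qed.

Lemma is_derive_mulmx_X {m} (v : 'M[R]_(n, m)) t :
  is_derive t (1 : R) (fun s => X s *m v) (A t *m (X t *m v)).
Proof.
suff -> : A t *m (X t *m v) = T *: (('J f (gamma t))^T *m X t) *m v.
  exact: is_derive_mulmxr.
by rewrite /A -!scalemxAl mulmxA.
Qed.

Lemma X_unitmx t : X t \in unitmx.
Proof.
apply: contraT; rewrite unitmxE unitfE negbK -det_tr => /det0P[v v_neq0 vX].
have Xv : X t *m v^T = 0 by rewrite -[X t]trmxK -trmx_mul vX trmx0.
have := linear_ode_zero A_continuous (is_derive_mulmx_X v^T) Xv 0.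
by rewrite X0 mul1mx => /eqP; rewrite trmx_eq0 (negbTE v_neq0).
Qed.

Lemma is_derive_field_orbit t :
  is_derive t (1 : R) (fun s => (f (gamma s))^T) (A t *m (f (gamma t))^T).
Proof.
have dgamma : differentiable gamma t by apply/derivable1_diffP; case: (gammaE t).
have df : differentiable f (gamma t) := (f_smooth 1).1 (gamma t).
have dfgamma := differentiable_comp dgamma df.
have : is_derive t (1 : R) (f \o gamma) ((T *: f (gamma t)) *m 'J f (gamma t)).
  apply: DeriveDef; first exact/derivable1_diffP.
  rewrite (deriveE (1 : R) dfgamma) (diff_comp dgamma df) /= -(deriveE (1 : R) dgamma).
  by have [_ ->] := gammaE t; rewrite -deriveE // deriveEjacobian.
move/is_derive_trmx.
by rewrite trmx_mul /A linearZ /= -scalemxAl -scalemxAr.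
Qed.

Lemma monodromy_fixes_field : gamma 1 = gamma 0 ->
  X 1 *m (f (gamma 0))^T = (f (gamma 0))^T.
Proof.
move=> gamma1; pose Z s := X s *m (f (gamma 0))^T - (f (gamma s))^T.
have ZE s : is_derive s (1 : R) Z (A s *m Z s).
  have := is_deriveB (is_derive_mulmx_X (f (gamma 0))^T s) (is_derive_field_orbit s).
  by rewrite /Z mulmxBr.
have Z0 : Z 0 = 0 by rewrite /Z X0 mul1mx subrr.
have := linear_ode_zero A_continuous ZE Z0 1.
by rewrite /Z gamma1 => /eqP; rewrite subr_eq0 => /eqP.
Qed.

Lemma conjmx_X_Ck (Q0 : 'M[R]_n) k : Ck k (fun t => X t *m Q0 *m invmx (X t)).
Proof.
apply: Ck_mulmx; first exact/Ck_mulmx/Ck_cst/X_Ck.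
exact/Ck_invmx/X_Ck/X_unitmx.
Qed.

End VariationalEquation.

Section RankOneUpdate.
Context {F : fieldType} {n : nat}.
Implicit Types (u : 'cV[F]_n) (w : 'rV[F]_n).

Lemma mulmx_col_row_neq0 u w : u != 0 -> w != 0 -> u *m w != 0.
Proof.
move=> /cV0Pn[i ui] /rV0Pn[j wj]; apply/matrix0Pn; exists i, j.
by rewrite mxE big_ord1 mulf_neq0.
Qed.

Lemma idempotent_1_sub_mulmx u w : u != 0 -> w != 0 ->
  (1%:M - u *m w) *m (1%:M - u *m w) = 1%:M - u *m w -> w *m u = 1%:M.
Proof.
move=> u_neq0 w_neq0 idem; set c := (w *m u) 0 0.
have wuE : w *m u = c%:M by rewrite {1}[w *m u]mx11_scalar.
have sqrE : (1%:M - u *m w) *m (1%:M - u *m w) =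
    1%:M - u *m w + (c - 1) *: (u *m w).
  rewrite mulmxBr !mulmxBl !mul1mx mulmx1 -mulmxA [w *m _]mulmxA wuE.
  by rewrite mul_scalar_mx scalemxAr scalerBl scale1r mulmxBr opprB.
have : (c - 1) *: (u *m w) = 0.
  by apply: (addrI (1%:M - u *m w)); rewrite -sqrE idem addr0.
move/eqP; rewrite scaler_eq0 (negbTE (mulmx_col_row_neq0 _ _ u_neq0 w_neq0)) orbF.
by rewrite subr_eq0 wuE => /eqP->.
Qed.

Lemma mxrank_1_sub_mulmx u w : u != 0 -> w *m u = 1%:M ->
  \rank (1%:M - u *m w) = (n - 1)%N.
Proof.
move=> u_neq0 wu1; set Q := 1%:M - u *m w.
have Qu : Q *m u = 0 by rewrite mulmxBl mul1mx -mulmxA wu1 mulmx1 subrr.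
have rank_lt : (1 <= n - \rank Q)%N.
  have uQ : (u^T <= kermx Q^T)%MS by apply/sub_kermxP; rewrite -trmx_mul Qu trmx0.
  rewrite -mxrank_tr -mxrank_ker (leq_trans _ (mxrankS uQ)) //.
  by rewrite mxrank_tr lt0n mxrank_eq0.
have rank_ge : (n <= \rank Q + 1)%N.
  rewrite -{1}(mxrank1 F n) -(subrK (u *m w) 1%:M) (leq_trans (mxrank_add _ _)) //.
  by rewrite leq_add2l (leq_trans (mxrankM_maxl _ _)) // rank_leq_col.
have := rank_leq_row Q; lia.
Qed.

Lemma mxrank_conjmx (P V : 'M[F]_n) : V \in unitmx ->
  \rank (V *m P *m invmx V) = \rank P.
Proof.
move=> V_unit.
by rewrite mxrankMfree ?row_free_unit ?unitmx_inv // eqmxMfull ?row_full_unit.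
Qed.

End RankOneUpdate.

Section BijectionOnImage.
Context {R : realType} {n : nat}.
Implicit Types (B P Q : 'M[R]_n).

Lemma bij_on_image_ker0 {B P} {v : 'cV[R]_n} : restricts_bij_on_image B P ->
  mx_image P v -> B *m v = 0 -> v = 0.
Proof.
move=> [_ B_inj _] Pv Bv0; apply: B_inj; rewrite ?in_setE //.
  by exists 0; rewrite mulmx0.
by rewrite /= mulmx0.
Qed.

Lemma bij_on_image_sub {B P Q} : restricts_bij_on_image B P ->
  Q *m B = B -> Q *m P = P.
Proof.
move=> [_ _ B_surj] QB; apply/matrixP => i j.
have [v _ vE] := B_surj (P *m delta_mx j 0) (ex_intro _ _ erefl).
have := congr1 (fun u : 'cV[R]_n => u i 0) (congr1 (mulmx Q) vE).
by rewrite /= mulmxA QB vE mulmxA -!colE !mxE.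
Qed.

Lemma proj_eq_of_bij_on_image B P Q (u : 'cV[R]_n) (w : 'rV[R]_n) :
  Q = 1%:M - u *m w -> w *m u = 1%:M -> B *m u = 0 -> B *m Q = Q *m B ->
  B *m P = P *m B -> P *m P = P -> \rank P = \rank Q ->
  restricts_bij_on_image B P -> P = Q.
Proof.
move=> QE wu1 Bu0 BQ BP Pidem rankPQ Bbij.
have QB : Q *m B = B by rewrite -BQ QE mulmxBr mulmx1 mulmxA Bu0 mul0mx subr0.
have Pu0 : P *m u = 0.
  apply: (bij_on_image_ker0 Bbij); first by exists u.
  by rewrite mulmxA BP -mulmxA Bu0 mulmx0.
have QP := bij_on_image_sub Bbij QB.
have /andP[_ /submxP[D QE']] : (P^T == Q^T)%MS.
  rewrite -(mxrank_leqif_eq _).2 ?mxrank_tr ?rankPQ //.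
  by rewrite -QP trmx_mul submxMl.
have PQ : P *m Q = Q by rewrite -[Q]trmxK QE' trmx_mul trmxK mulmxA Pidem.
by rewrite -[P]mulmx1 -(subrK (u *m w) 1%:M) -QE mulmxDr PQ mulmxA Pu0 mul0mx addr0.
Qed.

Lemma rank1_proj_normalized B (u : 'cV[R]_n) (w : 'rV[R]_n) :
  u != 0 -> B *m u = 0 -> (1%:M - u *m w) *m (1%:M - u *m w) = 1%:M - u *m w ->
  restricts_bij_on_image B (1%:M - u *m w) -> w *m u = 1%:M.
Proof.
move=> u_neq0 Bu0 idem Bbij; apply: idempotent_1_sub_mulmx => //.
apply: contra_neq u_neq0 => w0; apply: (bij_on_image_ker0 Bbij) => //.
by rewrite w0 mulmx0 subr0; exists u; rewrite mul1mx.
Qed.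

End BijectionOnImage.

Theorem mainTheorem7 (R : realType) (n : nat) (f : 'rV[R]_n -> 'rV[R]_n)
  (T : R) (gamma : R -> 'rV[R]_n) (X : R -> 'M[R]_n) (w : 'rV[R]_n) :
  (0 < n)%N ->
  smooth f ->
  0 < T ->
  (forall t : R, gamma (t + 1) = gamma t) ->
  (forall t : R, is_derive t (1 : R) gamma (T *: f (gamma t))) ->
  f (gamma 0) != 0 ->
  (forall t : R, is_derive t (1 : R) X (T *: ((('J f (gamma t))^T) *m X t))) ->
  X 0 = 1%:M ->
  let Gamma := fun t => X t *m (X 1 - 1%:M) *m invmx (X t) in
  let Q := fun t => X t *m (1%:M - (f (gamma 0))^T *m w) *m invmx (X t) in
  (forall t : R, Q t *m Q t = Q t) ->
  (forall t : R, Q (t + 1) = Q t) ->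
  (forall t : R, restricts_bij_on_image (Gamma t) (Q t)) ->
  (smooth Q /\
   (forall t : R, Q (t + 1) = Q t) /\
   (forall t : R, Q t *m Q t = Q t) /\
   (forall t : R, \rank (Q t) = (n - 1)%N) /\
   (forall t : R, X t *m Q 0 = Q t *m X t) /\
   (forall t : R, restricts_bij_on_image (Gamma t) (Q t))) /\
  (forall P : R -> 'M[R]_n,
     smooth P ->
     (forall t : R, P (t + 1) = P t) ->
     (forall t : R, P t *m P t = P t) ->
     (forall t : R, \rank (P t) = (n - 1)%N) ->
     (forall t : R, X t *m P 0 = P t *m X t) ->
     (forall t : R, restricts_bij_on_image (Gamma t) (P t)) ->
     forall t : R, P t = Q t).
Proof.
move=> _ f_smooth _ gamma_per gammaE f0_neq0 XE X0 Gamma Q Q_idem Q_per Q_bij.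
have X_unit := X_unitmx f_smooth gammaE XE X0.
set u := (f (gamma 0))^T; set B := X 1 - 1%:M; set Q0 := 1%:M - u *m w.
have u_neq0 : u != 0 by rewrite trmx_eq0.
have Bu0 : B *m u = 0.
  have gamma1 : gamma 1 = gamma 0 by rewrite -[1]add0r gamma_per.
  by rewrite mulmxBl (monodromy_fixes_field f_smooth gammaE XE X0 gamma1) mul1mx subrr.
have QE t : Q t = X t *m Q0 *m invmx (X t) by [].
have Q0E : Q 0 = Q0 by rewrite QE X0 invmx1 mul1mx mulmx1.
have Gamma0 : Gamma 0 = B by rewrite /Gamma X0 invmx1 mul1mx mulmx1.
have wu1 : w *m u = 1%:M.
  apply: (rank1_proj_normalized B) => //; first by rewrite -/Q0 -Q0E Q_idem.
  by rewrite -/Q0 -Q0E -Gamma0.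
have XQ t : X t *m Q 0 = Q t *m X t by rewrite Q0E QE mulmxKV.
have Q_rank t : \rank (Q t) = (n - 1)%N.
  by rewrite QE mxrank_conjmx // mxrank_1_sub_mulmx.
split.
  split=> [k|]; first exact: conjmx_X_Ck.
  by split; [|split; [|split; [|split]]].
move=> P _ P_per P_idem P_rank XP P_bij t.
have commB (V : 'M[R]_n) : X 1 *m V = V *m X 1 -> B *m V = V *m B.
  by move=> XV; rewrite mulmxBl mulmxBr XV mul1mx mulmx1.
have P0E : P 0 = Q0.
  apply: (proj_eq_of_bij_on_image B _ _ u w) => //.
  - by apply: commB; rewrite -{2}[Q0]Q0E -Q_per add0r QE mulmxKV.
  - by apply: commB; rewrite XP -{1}(add0r 1) P_per.
  - by rewrite P_rank mxrank_1_sub_mulmx.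
  - by rewrite -Gamma0.
by rewrite QE -P0E XP mulmxK.
Qed.
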